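(* Let $M$ be an ergodic aperiodic marker process. Then for every $m\ge1$ there is a marker process $M'$ which is a finitary dilution of $M$ and has minimal gap length at least $m$.
   Context: A marker process is a non-trivial $\{0,1\}$-valued $\mathbb{Z}$-process. Aperiodic: a.s.\ there is no $p\ge1$ with $M_{n+p}=M_n$ for all $n$. A finitary dilution of $M$ is a marker process $M'$ which is a finitary factor of $M$ (shift-equivariant, with $M'_0$ a.s.\ determined by $M$ on a random finite window) such that $M'_n\le M_n$ for all $n$. The occurrences of $M$ partition $\mathbb{Z}$ into intervals, each starting at a $1$ of $M$ and ending just before the next; $I^M_0$ denotes the interval containing $0$. The minimal gap length of $M$ is the largest $m\ge1$ with $|I^M_0|\ge m$ almost surely. *)

From mathcomp Require Import all_boot all_order all_algebra.
From mathcomp Require Import all_classical all_reals all_analysis.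
Set Implicit Arguments. Unset Strict Implicit. Unset Printing Implicit Defensive.
Import Order.TTheory GRing.Theory Num.Theory.
Local Open Scope classical_set_scope.
Local Open Scope ring_scope.

(* Two-sided {0,1}-sequences (false = 0, true = 1). *)
Definition bseq := int -> bool.

Definition coord_sets : set (set bseq) :=
  [set A | exists (n : int) (b : bool), A = [set x | x n = b]].

(* The path space {0,1}^Z with the product sigma-algebra. *)
Definition Omega := g_sigma_algebraType coord_sets.

Definition shift (x : Omega) : Omega := fun n => x (n + 1).

Definition as_ (R : realType) (mu : set Omega -> \bar R) (Q : Omega -> Prop) :=
  almost_everywhere mu [set x | Q x].

(* A Z-process with values in {0,1} is given by its law mu, a probability on
   Omega; it is a (stationary) Z-process when mu is shift-invariant. *)
Definition stationary (R : realType) (mu : set Omega -> \bar R) :=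
  forall A : set Omega, measurable A -> mu (shift @^-1` A) = mu A.

Definition nontrivial (R : realType) (mu : set Omega -> \bar R) :=
  ~ as_ mu (fun x => forall n, x n = false).

Definition marker_process (R : realType) (mu : set Omega -> \bar R) :=
  stationary mu /\ nontrivial mu.

Definition ergodic (R : realType) (mu : set Omega -> \bar R) :=
  forall A : set Omega, measurable A -> shift @^-1` A = A ->
    mu A = 0%E \/ mu A = 1%E.

Definition aperiodic (R : realType) (mu : set Omega -> \bar R) :=
  as_ mu (fun x => ~ exists p : nat, (0 < p)%N /\ forall n : int, x (n + p%:Z) = x n).

(* phi : Omega -> Omega is a finitary dilution of the process with law mu;
   the diluted process is M' = phi(M), whose law is pushforward mu phi. *)
Definition finitary_dilution (R : realType) (mu : set Omega -> \bar R)
    (phi : Omega -> Omega) :=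
  [/\ measurable_fun setT phi,
      (forall x, phi (shift x) = shift (phi x)),
      as_ mu (fun x => exists r : nat, forall y : Omega,
                (forall k : int, - r%:Z <= k <= r%:Z -> y k = x k) ->
                phi y 0 = phi x 0),
      (forall x n, (phi x n <= x n)%N) &
      marker_process (pushforward mu phi)].

(* I_0 of a sequence y: the interval (between consecutive 1s, starting at a 1)
   containing 0.  n and 0 lie in the same interval iff y has no 1 at any
   position k with min(0,n) < k <= max(0,n). *)
Definition I0 (y : bseq) : set int :=
  [set n | forall k : int, Num.min 0 n < k <= Num.max 0 n -> y k = false].

(* |I_0(y)| >= m (I_0 may be infinite). *)
Definition I0_size_ge (m : nat) (y : bseq) :=
  exists s : seq int, [/\ uniq s, size s = m & forall n, n \in s -> I0 y n].

Definition min_gap_ge (R : realType) (mu : set Omega -> \bar R) (m : nat) :=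
  as_ mu (I0_size_ge m).

From Pilot Require Import Defs.
From mathcomp Require Import all_boot all_order all_algebra.
From mathcomp Require Import all_classical all_reals all_analysis.
From mathcomp Require Import zify.

(* Fix a word w with a 1 at position a, and mark n whenever x reads w with
   position a placed at n.  This is a finitary, shift-equivariant dilution,
   and if w has no period d with 0 < d < m, i.e. two copies of w shifted by d
   disagree somewhere on their overlap, then two marks are never closer than
   m.  Some such word occurs with positive probability: around each 1 of an
   aperiodic sequence, the window on a large enough interval is such a word,
   and there are only countably many words, so if each of them almost surely
   never occurred, M would almost surely vanish. *)

Set Implicit Arguments. Unset Strict Implicit. Unset Printing Implicit Defensive.
Import Order.TTheory GRing.Theory Num.Theory.
Local Open Scope classical_set_scope.
Local Open Scope ring_scope.

Section AlmostEverywhere.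
Context d1 d2 (T1 : measurableType d1) (T2 : measurableType d2) (R : realType).
Variable mu : {measure set T1 -> \bar R}.

Lemma ae_forall_countable (I : countType) (Q : I -> T1 -> Prop) :
  (forall i, {ae mu, forall x, Q i x}) -> {ae mu, forall x, forall i, Q i x}.
Proof.
move=> aeQ.
have : {ae mu, forall x, forall k, if unpickle k is Some i then Q i x else True}.
  apply: ae_foralln => k; case: (unpickle k) => [i|]; first exact: aeQ.
  exact: aeW.
by apply: filterS => x Qx i; have := Qx (pickle i); rewrite pickleK.
Qed.

Variable f : T1 -> T2.
Hypothesis mf : measurable_fun setT f.

Lemma ae_pushforward (Q : T2 -> Prop) :
  {ae pushforward mu f, forall y, Q y} -> {ae mu, forall x, Q (f x)}.
Proof.
move=> [N [mN N0 notQN]]; exists (f @^-1` N); split => //.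
- by rewrite -[_ @^-1` _]setTI; exact: mf.
- by move=> x /notQN.
Qed.

Lemma ae_pushforward_range (A : set T2) (Q : T2 -> Prop) : measurable A ->
  (forall x, A (f x)) -> (forall y, A y -> Q y) -> {ae pushforward mu f, forall y, Q y}.
Proof.
move=> mA Af AQ; exists (~` A); split => [||y /= nQy Ay]; first exact: measurableC.
  rewrite /pushforward (_ : _ @^-1` _ = set0) ?measure0 //.
  by apply/seteqP; split => x // /(_ (Af x)).
exact/nQy/AQ.
Qed.

End AlmostEverywhere.

Lemma measurable_coord (n : int) (b : bool) : measurable [set x : Omega | x n = b].
Proof. by apply: sub_sigma_algebra; exists n, b. Qed.

Lemma measurable_fun_Omega d (T : measurableType d) (f : T -> Omega) :
  (forall n, measurable [set x | f x n = true]) -> measurable_fun setT f.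
Proof.
move=> mf; apply: (@measurability _ _ T Omega setT f coord_sets) => //.
move=> _ [_ [n [b ->]] <-]; rewrite setTI; case: b; first exact: mf.
rewrite (_ : _ @^-1` _ = ~` [set x | f x n = true]); first exact/measurableC/mf.
by apply/seteqP; split => x /=; case: (f x n).
Qed.

Lemma stationary_pushforward (R : realType) (mu : set Omega -> \bar R)
    (f : Omega -> Omega) : measurable_fun setT f ->
  (forall x, f (Defs.shift x) = Defs.shift (f x)) ->
  stationary mu -> stationary (pushforward mu f).
Proof.
move=> mf fS muS A mA; rewrite /pushforward.
have -> : f @^-1` (Defs.shift @^-1` A) = Defs.shift @^-1` (f @^-1` A).
  by apply/funext => x; rewrite /preimage /= fS.
by apply: muS; rewrite -[_ @^-1` _]setTI; exact: mf.
Qed.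

Definition window (x : Defs.bseq) (c : int) (k : nat) : seq bool :=
  mkseq (fun i => x (c + i%:Z)) k.

Lemma size_window x c k : size (window x c k) = k.
Proof. exact: size_mkseq. Qed.

Lemma nth_window x c k i : (i < k)%N -> nth false (window x c k) i = x (c + i%:Z).
Proof. exact: nth_mkseq. Qed.

Lemma window_eqP x c w :
  window x c (size w) = w <-> forall i, (i < size w)%N -> x (c + i%:Z) = nth false w i.
Proof.
split=> [xw i ki | xw]; first by rewrite -[in RHS]xw nth_window.
apply: (@eq_from_nth _ false) => [|i]; rewrite size_window // => ki.
by rewrite nth_window ?xw.
Qed.

Lemma window_shift x c k : window (Defs.shift x) c k = window x (c + 1) k.
Proof. by apply: eq_mkseq => i; rewrite /Defs.shift; congr x; lia. Qed.

Lemma eq_window x y c k :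
  (forall i, (i < k)%N -> y (c + i%:Z) = x (c + i%:Z)) -> window y c k = window x c k.
Proof.
move=> xy; apply: (@eq_from_nth _ false) => [|i]; rewrite !size_window // => ki.
by rewrite !nth_window ?xy.
Qed.

Lemma measurable_window_eq c w : measurable [set x : Omega | window x c (size w) = w].
Proof.
rewrite (_ : [set x | _] = \bigcap_(i in [set i | (i < size w)%N])
                            [set x : Omega | x (c + i%:Z) = nth false w i]).
  by apply: bigcap_measurableType => i _; exact: measurable_coord.
by apply/seteqP; split => x /window_eqP.
Qed.

Definition word_marker (a : nat) (w : seq bool) (x : Omega) : Omega :=
  fun n => window x (n - a%:Z) (size w) == w.

Definition no_period_below (m : nat) (w : seq bool) :=
  forall d, (0 < d < m)%N ->
    exists2 i, (i + d < size w)%N & nth false w i != nth false w (i + d).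

Definition marker_word (m a : nat) (w : seq bool) :=
  nth false w a /\ no_period_below m w.

Definition spaced (m : nat) (y : Defs.bseq) :=
  forall (n : int) (d : nat), (0 < d < m)%N -> y n -> y (n + d%:Z) = false.

Section WordMarker.
Variables (a : nat) (w : seq bool).

Lemma measurable_word_marker : measurable_fun setT (word_marker a w).
Proof.
apply: measurable_fun_Omega => n.
rewrite (_ : [set x | _] = [set x | window x (n - a%:Z) (size w) = w]).
  exact: measurable_window_eq.
by apply/seteqP; split => x /eqP.
Qed.

Lemma word_marker_shift x :
  word_marker a w (Defs.shift x) = Defs.shift (word_marker a w x).
Proof.
by apply/funext => n; rewrite /word_marker /Defs.shift window_shift addrAC.
Qed.

Lemma word_marker_finitary x y :
  (forall k : int, - (a + size w)%:Z <= k <= (a + size w)%:Z -> y k = x k) ->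
  word_marker a w y 0 = word_marker a w x 0.
Proof.
by move=> xy; rewrite /word_marker (eq_window (x := x)) // => i ki; apply: xy; lia.
Qed.

Lemma word_marker_le x n : nth false w a -> (word_marker a w x n <= x n)%N.
Proof.
move=> wa; case: (boolP (word_marker a w x n)) => // /eqP /window_eqP xw.
have aw : (a < size w)%N.
  by rewrite ltnNge; apply: contraL wa => /(nth_default false) ->.
by have := xw a aw; rewrite wa (_ : n - a%:Z + a%:Z = n) //; lia.
Qed.

Lemma word_marker_spaced m x : no_period_below m w -> spaced m (word_marker a w x).
Proof.
move=> wper n d dm /eqP /window_eqP xn; apply/negP => /eqP /window_eqP xnd.
have [i idw] := wper d dm; apply/negP; rewrite negbK; apply/eqP.
have wid : (i < size w)%N by apply: leq_trans idw; rewrite ltnS leq_addr.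
by rewrite -(xnd i wid) -(xn (i + d) idw); congr x; lia.
Qed.

End WordMarker.

Lemma measurable_spaced m : measurable [set y : Omega | spaced m y].
Proof.
rewrite (_ : [set y | _] = ~` \bigcup_(n : int) \bigcup_(d in [set d | (0 < d < m)%N])
    ([set y : Omega | y n = true] `&` [set y | y (n + d%:Z) = true])).
  apply/measurableC/countable_bigcupT_measurable => [|n]; first exact: countableP.
  by apply: bigcup_measurable => d _; apply: measurableI; exact: measurable_coord.
apply/seteqP; split=> y /=.
  by move=> ys [n _ [d dm [yn]]] /=; rewrite (ys n d dm yn).
move=> nobad n d dm yn; apply/negP => ynd; apply: nobad.
by exists n => //; exists d.
Qed.

Lemma I0_size_ge_interval (y : Defs.bseq) (k : int) (m : nat) :
  k <= 0 < k + m%:Z -> (forall j, k < j < k + m%:Z -> y j = false) -> I0_size_ge m y.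
Proof.
move=> k0m ykm; exists [seq k + i%:Z | i <- iota 0 m]; split.
- by rewrite map_inj_uniq ?iota_uniq // => i j /= ?; lia.
- by rewrite size_map size_iota.
- by move=> n /mapP [i]; rewrite mem_iota => /andP[_ im] -> j ij; apply: ykm; lia.
Qed.

Lemma I0_size_ge_spaced m (y : Defs.bseq) : (0 < m)%N -> spaced m y -> I0_size_ge m y.
Proof.
move=> m0 ys.
have [[k [km yk]] | no1] :=
  pselect (exists k : int, 1 - m%:Z <= k <= 0 /\ y k).
  apply: (I0_size_ge_interval (k := k)); first lia.
  move=> j kj; have := ys k (absz (j - k)); rewrite yk.
  by rewrite (_ : k + _ = j) => [-> //|]; lia.
apply: (I0_size_ge_interval (k := 1 - m%:Z)); first lia.
by move=> j kj; apply/negP => yj; apply: no1; exists j; split => //; lia.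
Qed.

Lemma marker_word_at m (x : Omega) (t : int) : x t ->
  ~ (exists p : nat, (0 < p)%N /\ forall n : int, x (n + p%:Z) = x n) ->
  exists a w, marker_word m a w /\ word_marker a w x t.
Proof.
move=> xt xaper.
have /choice [f xf] : forall d, exists n : int, (0 < d)%N -> x (n + d%:Z) != x n.
  move=> d; apply: contrapT => noshift; apply: xaper; exists d.
  have [d0 | d0] := posnP d; first by case: noshift; exists 0; rewrite d0.
  by split=> // n; apply/eqP/negPn/negP => dn; apply: noshift; exists n.
pose L := (\max_(d < m) (absz (f d - t) + d))%N.
have fL d : (d < m)%N -> (absz (f d - t) + d <= L)%N.
  by move=> dm; apply: (leq_bigmax_cond (Ordinal dm)).
clearbody L.
exists L, (window x (t - L%:Z) (L + L).+1); split; first split.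
- by rewrite nth_window ?subrK // ltnS leq_addl.
- move=> d /andP[d0 dm]; have fdL := fL d dm.
  have fdw : t - L%:Z + (absz (f d - t + L%:Z))%:Z = f d by lia.
  exists (absz (f d - t + L%:Z)); first by rewrite size_window; lia.
  by rewrite !nth_window ?PoszD ?addrA ?fdw 1?eq_sym ?xf //; lia.
- by rewrite /word_marker size_window.
Qed.

Lemma exists_occurring_marker_word (R : realType) (P : probability Omega R) m :
  nontrivial P -> aperiodic P -> exists a w,
    marker_word m a w /\ ~ as_ P (fun x => forall n, word_marker a w x n = false).
Proof.
move=> Pnontriv Paper; apply: contrapT => noword; apply: Pnontriv.
have null_words : {ae P, forall x, forall aw : nat * seq bool,
    marker_word m aw.1 aw.2 -> forall n, word_marker aw.1 aw.2 x n = false}.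
  apply: ae_forall_countable => -[a w] /=.
  have [mw | nmw] := pselect (marker_word m a w); last by apply: aeW => x /nmw.
  suff : {ae P, forall x, forall n, word_marker a w x n = false}.
    by apply: filterS => x + _.
  by apply: contrapT => occurs; apply: noword; exists a, w.
rewrite /as_; apply: filterS2 null_words Paper => x xnull xaper n.
apply/negP => xn; have [a [w [mw xw]]] := marker_word_at m xn xaper.
by rewrite (xnull (a, w)) in xw.
Qed.

Theorem lemma3p11 (R : realType) (P : probability Omega R) :
  marker_process P -> ergodic P -> aperiodic P ->
  forall m : nat, (1 <= m)%N ->
  exists phi : Omega -> Omega,
    finitary_dilution P phi /\ min_gap_ge (pushforward P phi) m.
Proof.
move=> [Pstat Pnontriv] _ Paper m m0.
have [a [w [[wa wper] occurs]]] := exists_occurring_marker_word m Pnontriv Paper.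
have mphi := measurable_word_marker a w.
exists (word_marker a w); split; first split.
- exact: mphi.
- exact: word_marker_shift.
- by apply: aeW => x; exists (a + size w)%N => y; exact: word_marker_finitary.
- by move=> x n; exact: word_marker_le.
- split; first exact: stationary_pushforward mphi (@word_marker_shift a w) Pstat.
  by move=> /(ae_pushforward mphi) /occurs.
- apply: (ae_pushforward_range _ (measurable_spaced m)) => [x | y].
    exact: word_marker_spaced.
  exact: I0_size_ge_spaced.
Qed.
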